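(* Let $V=\langle f,g,h\rangle\subset R_2$ be a three-dimensional space of quadrics in $R=K[w,x,y,z]$ whose space of linear relations $\{(\alpha_1,\alpha_2,\alpha_3)\in R_1^3:\alpha_1f+\alpha_2g+\alpha_3h=0\}$ is exactly one-dimensional. Then $V=\langle \ell\cdot U,h'\rangle$ where $\ell\in R_1$ is a linear form, $U\subset R_1$ is a two-dimensional subspace of linear forms, and $h'$ is a quadric divisible neither by $\ell$ nor by any element of $U$. Consequently, after a linear change of coordinates, either $V=\langle xw,yw,h'\rangle$ with $h'$ divisible neither by $w$ nor by any element of $\langle x,y\rangle$, or $V=\langle w^2,wx,h'\rangle$ with $h'$ divisible by no element of $\langle w,x\rangle$.
   Context: $K$ is an algebraically closed field, $R=K[w,x,y,z]$ standard graded, $R_i$ its degree-$i$ component. A net of quadrics is a three-dimensional subspace $V\subset R_2$; a linear relation is a nonzero triple of linear forms $(\alpha_1,\alpha_2,\alpha_3)$ with $\alpha_1f+\alpha_2g+\alpha_3h=0$. *)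

From HB Require Import structures.
From mathcomp Require Import all_boot all_order all_algebra.
From mathcomp Require Import mpoly.
Set Implicit Arguments. Unset Strict Implicit. Unset Printing Implicit Defensive.
Import GRing.Theory.
Local Open Scope ring_scope.

Section Defs.
Variable K : closedFieldType.
Local Notation P := {mpoly K[4]}.

Definition Xw : P := 'X_(@Ordinal 4 0 isT).
Definition Xx : P := 'X_(@Ordinal 4 1 isT).
Definition Xy : P := 'X_(@Ordinal 4 2 isT).
Definition Xz : P := 'X_(@Ordinal 4 3 isT).

(* R_1 and R_2: homogeneous of degree 1 / 2 (0 included) *)
Definition linform (p : P) : Prop := p \is 1.-homog.
Definition quadric (p : P) : Prop := p \is 2.-homog.

Definition span2 (a b : P) (p : P) : Prop :=
  exists x y : K, p = x *: a + y *: b.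
Definition span3 (a b c : P) (p : P) : Prop :=
  exists x y z : K, p = x *: a + y *: b + z *: c.

Definition lin_indep2 (a b : P) : Prop :=
  forall x y : K, x *: a + y *: b = 0 -> x = 0 /\ y = 0.
Definition lin_indep3 (a b c : P) : Prop :=
  forall x y z : K, x *: a + y *: b + z *: c = 0 -> x = 0 /\ y = 0 /\ z = 0.

Definition same_span3 (a b c a' b' c' : P) : Prop :=
  forall p, span3 a b c p <-> span3 a' b' c' p.

Definition mdvd (a p : P) : Prop := exists q : P, p = q * a.

Definition linrel (f g h a1 a2 a3 : P) : Prop :=
  [/\ linform a1, linform a2, linform a3 & a1 * f + a2 * g + a3 * h = 0].

Definition linrels_dim1 (f g h : P) : Prop :=
  exists a1 a2 a3 : P,
    [/\ linrel f g h a1 a2 a3, (a1, a2, a3) != (0, 0, 0) &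
        forall b1 b2 b3, linrel f g h b1 b2 b3 ->
          exists c : K, [/\ b1 = c *: a1, b2 = c *: a2 & b3 = c *: a3]].

(* a linear change of coordinates: X_i |-> t_i with t_0..t_3 linearly
   independent linear forms (i.e. an invertible linear substitution) *)
Definition coord_change (t : 4.-tuple P) : Prop :=
  (forall i, linform (tnth t i)) /\
  (forall c : 'I_4 -> K, \sum_(i < 4) c i *: tnth t i = 0 -> forall i, c i = 0).

End Defs.

(* A relation a1 f + a2 g + a3 h = 0 with linear a_i cannot have linearly
   independent coefficients: in coordinates where they are w, x, y, the Koszul
   complex of (w, x, y) produces a second, independent relation.  So, up to
   permuting f, g, h, we have a3 = k1 a1 + k2 a2, whence
   a1 (f + k1 h) + a2 (g + k2 h) = 0 with a1, a2 independent (otherwise f, g, h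
   would be dependent).  Factoring this syzygy gives f + k1 h = a2 m and
   g + k2 h = - a1 m, so V = <m U, h> with U = <a1, a2>; a linear factor of h
   in <m> or in U would give another relation.  Finally m, a1, a2 are either
   independent, giving V = <x w, y w, h'> in suitable coordinates, or m lies
   in U, giving V = <w^2, w x, h'>. *)

From HB Require Import structures.
From mathcomp Require Import all_boot all_order all_algebra.
From mathcomp Require Import mpoly ring.
From Stdlib Require Import Classical.
Set Implicit Arguments.
Unset Strict Implicit.
Unset Printing Implicit Defensive.
Import GRing.Theory.
Local Open Scope ring_scope.

Section Substitution.
Variables (n : nat) (R : comRingType).
Local Notation P := {mpoly R[n]}.

Lemma dhomog_comp d (p : P) (t : n.-tuple P) : (forall i, tnth t i \is 1.-homog) ->
  p \is d.-homog -> p \mPo t \is d.-homog.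
Proof.
move=> ht hp; rewrite comp_mpolyE big_seq; apply: rpred_sum => m hm; apply: rpredZ.
rewrite -(dhomog_mf hp hm) /= mdegE.
apply: (big_ind2 (fun (e : nat) (r : P) => r \is e.-homog)) => [|e1 r1 e2 r2|i _].
- exact: dhomog1.
- exact: dhomogM.
- by have := dhomogMn (m i) (ht i); rewrite mul1n.
Qed.

Lemma comp_mpolyA (p : P) (t s : n.-tuple P) :
  (p \mPo t) \mPo s = p \mPo [tuple tnth t i \mPo s | i < n].
Proof.
rewrite (comp_mpolyEX p t) (comp_mpolyEX p [tuple _ | i < n]) raddf_sum /=.
apply: eq_bigr => m _; rewrite comp_mpolyZ !comp_mpolyX rmorph_prod; congr (_ *: _).
by apply: eq_bigr => i _; rewrite rmorphXn tnth_mktuple.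
Qed.

End Substitution.

Section SplitVariable.
Variables (n : nat) (R : idomainType).
Local Notation P := {mpoly R[n]}.
Implicit Types (p q F G H : P) (i j k : 'I_n).

Definition atX0 k : n.-tuple P := [tuple if i == k then 0 else 'X_i | i < n].

Lemma atX0_X j k : 'X_j \mPo atX0 k = if j == k then 0 else 'X_j.
Proof. by rewrite comp_mpolyXU -tnth_nth tnth_mktuple. Qed.

Lemma atX0_Xid k : 'X_k \mPo atX0 k = 0.
Proof. by rewrite atX0_X eqxx. Qed.

Lemma atX0_Xneq j k : j != k -> 'X_j \mPo atX0 k = 'X_j.
Proof. by rewrite atX0_X => /negbTE ->. Qed.

Lemma atX0_monomial k (m : 'X_{1..n}) :
  'X_[m] \mPo atX0 k = if m k == 0%N then 'X_[m] else 0.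
Proof.
rewrite comp_mpolyX; case: eqP => [mk0|/eqP mk].
- rewrite [RHS]mpolyXE_id; apply: eq_bigr => i _; rewrite tnth_mktuple.
  by case: eqP => [->|]; rewrite ?mk0 ?expr0.
- by rewrite (bigD1 k) //= tnth_mktuple eqxx expr0n (negbTE mk) mul0r.
Qed.

Lemma dhomog_splitX k d p : p \is d.+1.-homog ->
  exists2 q, q \is d.-homog & p = 'X_k * q + (p \mPo atX0 k).
Proof.
move=> hp; pose split_off r := exists2 q, q \is d.-homog & r = 'X_k * q + (r \mPo atX0 k).
have split_monomial m : mdeg m = d.+1 -> split_off 'X_[m].
  move=> dm; rewrite /split_off atX0_monomial; case: eqP => [_|/eqP mk].
    by exists 0; rewrite ?dhomog0 ?mulr0 ?add0r.
  have le_km : (U_(k) <= m)%MM.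
    by apply/mnm_lepP => i; rewrite mnm1E; case: eqP => [<-|]; rewrite ?lt0n.
  exists 'X_[m - U_(k)]; last by rewrite addr0 -mpolyXD addmC submK.
  by rewrite dhomogX /=; have := mdegD (m - U_(k)) U_(k); rewrite submK // mdeg1 dm addn1 => -[->].
suff : split_off p by [].
rewrite (mpolyE p) big_seq; apply: (big_ind split_off) => [|r1 r2 [q1 h1 e1] [q2 h2 e2]|m hm].
- by exists 0; rewrite ?dhomog0 // comp_mpoly0 mulr0 addr0.
- by exists (q1 + q2); [exact: rpredD | rewrite raddfD /= {1}e1 {1}e2 mulrDr; ring].
- have [q hq e] := split_monomial m (dhomog_mf hp hm).
  by exists (p@_m *: q); [exact: rpredZ | rewrite comp_mpolyZ {1}e scalerDr scalerAr].
Qed.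

Lemma mpolyX_neq0 i : 'X_i != 0 :> P.
Proof. by rewrite -msupp_eq0 msuppX. Qed.

Lemma mulX_eq0 i p : ('X_i * p == 0) = (p == 0).
Proof. by rewrite mulf_eq0 (negbTE (mpolyX_neq0 i)). Qed.

Lemma dhomogX1 i : ('X_i : P) \is 1.-homog.
Proof. by rewrite dhomogX /= mdeg1. Qed.

Lemma syzygyX_atX0 i j F G : i != j -> 'X_i * F + 'X_j * G = 0 -> F \mPo atX0 j = 0.
Proof.
move=> ij /(congr1 (comp_mpoly (atX0 j))).
rewrite rmorphD !rmorphM /= atX0_Xid atX0_Xneq // mul0r addr0 raddf0.
by move/eqP; rewrite mulX_eq0 => /eqP.
Qed.

Lemma syzygyX2 i j d F G : i != j -> F \is d.+1.-homog ->
  'X_i * F + 'X_j * G = 0 -> exists2 m, m \is d.-homog & F = 'X_j * m /\ G = - ('X_i * m).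
Proof.
move=> ij hF e; have [m hm eF] := dhomog_splitX j hF.
rewrite (syzygyX_atX0 ij e) addr0 in eF; exists m => //; split => //.
apply/eqP; rewrite -addr_eq0 -(mulX_eq0 j); apply/eqP.
by rewrite -[RHS]e eF; ring.
Qed.

Lemma koszulX3 i j k d F G H : [/\ i != j, j != k & i != k] ->
  G \is d.+1.-homog -> H \is d.+1.-homog -> 'X_i * F + 'X_j * G + 'X_k * H = 0 ->
  exists c1 c2 c3, [/\ [/\ c1 \is d.-homog, c2 \is d.-homog & c3 \is d.-homog],
    F = 'X_j * c3 - 'X_k * c2, G = 'X_k * c1 - 'X_i * c3 & H = 'X_i * c2 - 'X_j * c1].
Proof.
move=> [ij jk ik] hG hH e.
have [qG hqG eG] := dhomog_splitX i hG; have [qH hqH eH] := dhomog_splitX i hH.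
set G0 := G \mPo atX0 i in eG; set H0 := H \mPo atX0 i in eH.
have e0 : 'X_j * G0 + 'X_k * H0 = 0.
  have := congr1 (comp_mpoly (atX0 i)) e.
  by rewrite !rmorphD !rmorphM /= atX0_Xid !atX0_Xneq 1?eq_sym // mul0r add0r raddf0.
have hG0 : G0 \is d.+1.-homog.
  by rewrite [G0](_ : _ = G - 'X_i * qG) ?rpredB ?(dhomogM (dhomogX1 i)) // eG; ring.
have [r hr [eG0 eH0]] := syzygyX2 jk hG0 e0.
have eF : F = - ('X_j * qG + 'X_k * qH).
  apply/eqP; rewrite -addr_eq0 -(mulX_eq0 i); apply/eqP.
  by rewrite -[RHS]e eG eH eG0 eH0; ring.
exists r, qH, (- qG); split; rewrite ?rpredN //; first by rewrite eF; ring.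
  by rewrite eG eG0; ring.
by rewrite eH eH0; ring.
Qed.

Lemma dvdX_dhomog i d h q : h \is d.+1.-homog -> h = q * 'X_i ->
  exists2 m, m \is d.-homog & h = m * 'X_i.
Proof.
move=> hh e; have [m hm eh] := dhomog_splitX i hh; exists m => //.
by rewrite {1}eh e rmorphM /= atX0_Xid mulr0 addr0 mulrC.
Qed.

End SplitVariable.

Section LinearCoordinates.
Variables (n : nat) (K : fieldType).
Local Notation P := {mpoly K[n]}.

Definition lin_of_row (v : 'rV[K]_n) : P := \sum_(i < n) v 0 i *: 'X_i.
Definition row_of_lin (p : P) : 'rV[K]_n := \row_(i < n) p@_U_(i)%MM.

Lemma dhomog_lin_of_row v : lin_of_row v \is 1.-homog.
Proof. by apply: rpred_sum => i _; apply: rpredZ; rewrite dhomogX /= mdeg1. Qed.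

Lemma mcoeff_lin_of_row v m : (lin_of_row v)@_m = \sum_(i < n) v 0 i * (U_(i)%MM == m)%:R.
Proof. by rewrite /lin_of_row raddf_sum /=; apply: eq_bigr => i _; rewrite mcoeffZ mcoeffX. Qed.

Lemma mnm1_inj : injective (fun i : 'I_n => U_(i)%MM).
Proof. by move=> i j /(congr1 (fun m : 'X_{1..n} => m j)); rewrite !mnm1E eqxx; case: eqP. Qed.

Lemma lin_of_rowK : cancel lin_of_row row_of_lin.
Proof.
move=> v; apply/rowP => j; rewrite mxE mcoeff_lin_of_row (bigD1 j) //= eqxx mulr1.
by rewrite big1 ?addr0 // => i ij; rewrite (inj_eq mnm1_inj) (negbTE ij) mulr0.
Qed.

Lemma row_of_linK p : p \is 1.-homog -> lin_of_row (row_of_lin p) = p.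
Proof.
move=> hp; apply/mpolyP => m; rewrite mcoeff_lin_of_row.
have [/mdeg1P [i /eqP ->]|dm] := boolP (mdeg m == 1%N).
  rewrite (bigD1 i) //= eqxx mulr1 big1 ?addr0 ?mxE // => j ji.
  by rewrite (inj_eq mnm1_inj) (negbTE ji) mulr0.
rewrite (dhomog_nemf_coeff hp dm) big1 // => i _.
have /negbTE -> : U_(i)%MM != m by apply: contraNneq dm => <-; rewrite mdeg1.
by rewrite mulr0.
Qed.

Lemma lin_of_row_mul k (c : 'rV[K]_k) (U : 'M[K]_(k, n)) :
  lin_of_row (c *m U) = \sum_(i < k) c 0 i *: lin_of_row (row i U).
Proof.
under [RHS]eq_bigr do rewrite scaler_sumr.
rewrite exchange_big /=; apply: eq_bigr => j _; rewrite !mxE scaler_suml.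
by apply: eq_bigr => i _; rewrite !mxE scalerA.
Qed.

Definition lin_subst (M : 'M[K]_n) : n.-tuple P := [tuple lin_of_row (row i M) | i < n].

Lemma lin_subst_X M i : 'X_i \mPo lin_subst M = lin_of_row (row i M).
Proof. by rewrite comp_mpolyXU -tnth_nth tnth_mktuple. Qed.

Lemma lin_of_row_subst v M : lin_of_row v \mPo lin_subst M = lin_of_row (v *m M).
Proof.
rewrite lin_of_row_mul raddf_sum /=; apply: eq_bigr => i _.
by rewrite comp_mpolyZ lin_subst_X.
Qed.

Lemma lin_of_row1 i : lin_of_row (row i 1%:M) = 'X_i.
Proof.
rewrite /lin_of_row (bigD1 i) //= !mxE eqxx scale1r big1 ?addr0 // => j ji.
by rewrite !mxE eq_sym (negbTE ji) scale0r.
Qed.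

Lemma lin_substK M N : N *m M = 1%:M ->
  cancel (comp_mpoly (lin_subst N)) (comp_mpoly (lin_subst M)).
Proof.
move=> NM p; rewrite comp_mpolyA -[RHS]comp_mpoly_id; congr (_ \mPo _).
by apply: eq_mktuple => i; rewrite tnth_mktuple lin_of_row_subst -row_mul NM lin_of_row1.
Qed.

Lemma free_tuple_of_cancel (t s : n.-tuple P) : cancel (comp_mpoly t) (comp_mpoly s) ->
  forall c : 'I_n -> K, \sum_i c i *: tnth t i = 0 -> forall i, c i = 0.
Proof.
move=> ts c e i.
have : lin_of_row (\row_j c j) \mPo t = 0.
  rewrite -[RHS]e /lin_of_row raddf_sum /=; apply: eq_bigr => j _.
  by rewrite comp_mpolyZ comp_mpolyXU -tnth_nth mxE.
move=> /(congr1 (comp_mpoly s)); rewrite ts raddf0 => /(congr1 row_of_lin).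
by rewrite lin_of_rowK => /rowP /(_ i); rewrite !mxE mcoeff0.
Qed.

Lemma row_free_completion k (B : 'M[K]_(k, n)) : row_free B ->
  exists2 M : 'M[K]_n, M \in unitmx & pid_mx k *m M = B.
Proof.
move=> freeB; have le_kn : (k <= n)%N by rewrite -(eqP freeB) rank_leq_col.
pose E : 'M[K]_(k, n) := pid_mx k.
have pidK : E *m E^T *m B = B by rewrite tr_pid_mx pid_mx_id // pid_mx_1 mul1mx.
have rank_pidB : \rank (E *m (E^T *m B)) = \rank E.
  by rewrite mulmxA pidK (eqP freeB) rank_pid_mx.
have [M unitM eM] := complete_unitmx rank_pidB.
by exists M; rewrite // -eM mulmxA pidK.
Qed.

Definition lin_inverses (t s : n.-tuple P) :=
  [/\ forall i, tnth t i \is 1.-homog, forall i, tnth s i \is 1.-homog,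
      cancel (comp_mpoly t) (comp_mpoly s) & cancel (comp_mpoly s) (comp_mpoly t)].

Lemma linear_coordinates k (v : 'I_k -> P) : (forall i, v i \is 1.-homog) ->
  (forall c : 'I_k -> K, \sum_i c i *: v i = 0 -> forall i, c i = 0) ->
  exists t s, lin_inverses t s /\
    forall (i : 'I_k) (j : 'I_n), val j = val i -> v i \mPo t = 'X_j.
Proof.
move=> hv freev; pose B := \matrix_(i < k) row_of_lin (v i).
have freeB : row_free B.
  apply: inj_row_free => w wB0; apply/rowP => i; rewrite mxE.
  apply: (freev (fun i => w 0 i)); transitivity (lin_of_row (w *m B)).
    by rewrite lin_of_row_mul; apply: eq_bigr => j _; rewrite rowK row_of_linK.
  by rewrite wB0 /lin_of_row big1 // => j _; rewrite mxE scale0r.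
have le_kn : (k <= n)%N by rewrite -(eqP freeB) rank_leq_col.
have [M unitM eM] := row_free_completion freeB.
have MK : cancel (comp_mpoly (lin_subst M)) (comp_mpoly (lin_subst (invmx M))).
  by apply: lin_substK; rewrite mulmxV.
exists (lin_subst (invmx M)), (lin_subst M); split.
  split=> //; try by move=> i; rewrite tnth_mktuple dhomog_lin_of_row.
  by apply: lin_substK; rewrite mulVmx.
have rowB i : row i B = row_of_lin (v i) by rewrite rowK.
move=> i j ji; rewrite -[v i]row_of_linK // -rowB -eM.
have -> : j = widen_ord le_kn i by apply: val_inj.
rewrite row_mul pid_mxErow row_rowsub -row_mul mul1mx -lin_subst_X; exact: MK.
Qed.

End LinearCoordinates.

Local Notation iw := (@Ordinal 4 0 isT).
Local Notation ix := (@Ordinal 4 1 isT).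
Local Notation iy := (@Ordinal 4 2 isT).

Section Nets.
Variable K : closedFieldType.
Local Notation P := {mpoly K[4]}.
Implicit Types (a b c f g h p q l m u v : P) (t s : 4.-tuple P).

Lemma one_neq0 : (1 : K) <> 0.
Proof. by apply/eqP; rewrite oner_eq0. Qed.

Lemma coord_change_lin_inverses t s : lin_inverses t s -> coord_change t.
Proof. by case=> ht _ ts _; split; [exact: ht | exact: free_tuple_of_cancel ts]. Qed.

Lemma coordinates1 a : linform a -> a != 0 ->
  exists t s, lin_inverses t s /\ a \mPo t = 'X_iw.
Proof.
move=> ha a0; have [|t [s [ts vt]]] := @linear_coordinates 4 K 1 (fun=> a) (fun=> ha).
  move=> c; rewrite big_ord1 => /eqP; rewrite scaler_eq0 (negbTE a0) orbF => /eqP c0.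
  by case=> -[|//] ?; rewrite -c0; congr c; exact: val_inj.
by exists t, s; split; last exact: vt ord0 iw erefl.
Qed.

Lemma coordinates2 a b : linform a -> linform b -> lin_indep2 a b ->
  exists t s, lin_inverses t s /\ a \mPo t = 'X_iw /\ b \mPo t = 'X_ix.
Proof.
move=> ha hb ab; pose v (i : 'I_2) := [:: a; b]`_i.
have [|c|t [s [ts vt]]] := @linear_coordinates 4 K 2 v; first by case=> -[|[|]].
  rewrite !big_ord_recl big_ord0 addr0 => /ab [c0 c1].
  by case=> -[|[|//]] ?; [rewrite -c0 | rewrite -c1]; congr c; exact: val_inj.
exists t, s; split => //; split.
- by move: (vt ord0 iw erefl).
- by move: (vt (Ordinal (isT : (1 < 2)%N)) ix erefl).
Qed.

Lemma coordinates3 a b c : linform a -> linform b -> linform c -> lin_indep3 a b c ->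
  exists t s, lin_inverses t s /\
    [/\ a \mPo t = 'X_iw, b \mPo t = 'X_ix & c \mPo t = 'X_iy].
Proof.
move=> ha hb hc abc; pose v (i : 'I_3) := [:: a; b; c]`_i.
have [|k|t [s [ts vt]]] := @linear_coordinates 4 K 3 v; first by case=> -[|[|[|]]].
  rewrite !big_ord_recl big_ord0 addr0 addrA => /abc [k0 [k1 k2]].
  by case=> -[|[|[|//]]] ?; [rewrite -k0 | rewrite -k1 | rewrite -k2]; congr k; exact: val_inj.
exists t, s; split=> //; split.
- by move: (vt ord0 iw erefl).
- by move: (vt (Ordinal (isT : (1 < 3)%N)) ix erefl).
- by move: (vt (Ordinal (isT : (2 < 3)%N)) iy erefl).
Qed.

Lemma linear_syzygy2 a1 a2 F G : linform a1 -> linform a2 -> lin_indep2 a1 a2 ->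
  quadric F -> a1 * F + a2 * G = 0 -> exists2 m, linform m & F = a2 * m /\ G = - (a1 * m).
Proof.
move=> ha1 ha2 a12 hF e; have [t [s [[ht hs ts _] [e1 e2]]]] := coordinates2 ha1 ha2 a12.
have := congr1 (comp_mpoly t) e; rewrite rmorphD !rmorphM /= e1 e2 raddf0 => et.
have [//|m hm [eF eG]] := syzygyX2 _ (dhomog_comp ht hF) et.
exists (m \mPo s); first exact: dhomog_comp hs hm.
by split; [rewrite -(ts F) eF | rewrite -(ts G) eG rmorphN]; rewrite rmorphM /= -?e1 -?e2 ts.
Qed.

Lemma mdvd_quadric_linform v h : linform v -> v != 0 -> quadric h -> mdvd v h ->
  exists2 m, linform m & h = m * v.
Proof.
move=> hv v0 hh [q e]; have [t [s [[ht hs ts _] ev]]] := coordinates1 hv v0.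
have := congr1 (comp_mpoly t) e; rewrite rmorphM /= ev => et.
have [m hm em] := dvdX_dhomog (dhomog_comp ht hh) et.
exists (m \mPo s); first exact: dhomog_comp hs hm.
by rewrite -(ts h) em rmorphM /= -ev ts.
Qed.

Lemma not_lin_indep2 a b : ~ lin_indep2 a b ->
  exists x y : K, x *: a + y *: b = 0 /\ ~ (x = 0 /\ y = 0).
Proof.
move=> ab; apply: NNPP => nxy; apply: ab => x y e.
by apply: NNPP => xy; apply: nxy; exists x, y.
Qed.

Lemma not_lin_indep3 a b c : ~ lin_indep3 a b c ->
  exists x y z : K, x *: a + y *: b + z *: c = 0 /\ ~ [/\ x = 0, y = 0 & z = 0].
Proof.
move=> abc; apply: NNPP => nxyz; apply: abc => x y z e.
by apply: NNPP => xyz; apply: nxyz; exists x, y, z; split => // -[x0 y0 z0]; apply: xyz.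
Qed.

Lemma lin_rel3_solve a1 a2 a3 (x y z : K) : z != 0 ->
  x *: a1 + y *: a2 + z *: a3 = 0 -> a3 = (- x / z) *: a1 + (- y / z) *: a2.
Proof.
move=> z0 e; apply: (scalerI z0); rewrite scalerDr !scalerA !(mulrC z) !divfK //.
by rewrite !scaleNr -opprD; apply/eqP; rewrite -addr_eq0 addrC e.
Qed.

Lemma span3_sub a b c a' b' c' : span3 a b c a' -> span3 a b c b' -> span3 a b c c' ->
  forall p, span3 a' b' c' p -> span3 a b c p.
Proof.
move=> [x1 [y1 [z1 ->]]] [x2 [y2 [z2 ->]]] [x3 [y3 [z3 ->]]] p [x [y [z ->]]].
exists (x * x1 + y * x2 + z * x3), (x * y1 + y * y2 + z * y3), (x * z1 + y * z2 + z * z3).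
by rewrite -!mul_mpolyC; ring.
Qed.

Lemma same_span3I a b c a' b' c' :
  span3 a b c a' -> span3 a b c b' -> span3 a b c c' ->
  span3 a' b' c' a -> span3 a' b' c' b -> span3 a' b' c' c ->
  same_span3 a b c a' b' c'.
Proof. by move=> ? ? ? ? ? ? p; split; apply: span3_sub. Qed.

Lemma same_span3_trans a b c a' b' c' a'' b'' c'' : same_span3 a b c a' b' c' ->
  same_span3 a' b' c' a'' b'' c'' -> same_span3 a b c a'' b'' c''.
Proof. by move=> e1 e2 p; rewrite e1 e2. Qed.

Lemma same_span3_swap12 a b c : same_span3 a b c b a c.
Proof. by move=> p; split=> -[x [y [z ->]]]; exists y, x, z; rewrite (addrC (x *: _)). Qed.

Lemma same_span3_swap23 a b c : same_span3 a b c a c b.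
Proof. by move=> p; split=> -[x [y [z ->]]]; exists x, z, y; rewrite addrAC. Qed.

Lemma same_span3_comp a b c a' b' c' (t : 4.-tuple P) : same_span3 a b c a' b' c' ->
  same_span3 (a \mPo t) (b \mPo t) (c \mPo t) (a' \mPo t) (b' \mPo t) (c' \mPo t).
Proof.
have comp_span a1 b1 c1 x y z : x *: (a1 \mPo t) + y *: (b1 \mPo t) + z *: (c1 \mPo t)
    = (x *: a1 + y *: b1 + z *: c1) \mPo t by rewrite !raddfD /= !comp_mpolyZ.
have span_comp a1 b1 c1 p :
    span3 a1 b1 c1 p -> span3 (a1 \mPo t) (b1 \mPo t) (c1 \mPo t) (p \mPo t).
  by move=> [x [y [z ->]]]; exists x, y, z; rewrite comp_span.
move=> e p; split=> -[x [y [z ->]]]; rewrite comp_span; apply: span_comp; apply/e.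
  by exists x, y, z.
by exists x, y, z.
Qed.

Definition unique_relation f g h a1 a2 a3 :=
  [/\ [/\ quadric f, quadric g & quadric h], lin_indep3 f g h,
      linrel f g h a1 a2 a3, ~ [/\ a1 = 0, a2 = 0 & a3 = 0] &
      forall b1 b2 b3, linrel f g h b1 b2 b3 ->
        exists c : K, [/\ b1 = c *: a1, b2 = c *: a2 & b3 = c *: a3]].

Definition lU_presentation f g h :=
  exists l u1 u2 h',
    [/\ linform l, l != 0, linform u1, linform u2 & lin_indep2 u1 u2] /\
    [/\ quadric h', same_span3 f g h (l * u1) (l * u2) h', ~ mdvd l h' &
        forall a b : K, ~ mdvd (a *: u1 + b *: u2) h'].

Section ReducedRelation.
Variables (f g h a1 a2 a3 : P) (k1 k2 : K).
Hypotheses (qf : quadric f) (qh : quadric h) (fgh : lin_indep3 f g h).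
Hypotheses (la1 : linform a1) (la2 : linform a2) (rel : a1 * f + a2 * g + a3 * h = 0).
Hypothesis a_neq0 : ~ [/\ a1 = 0, a2 = 0 & a3 = 0].
Hypothesis rel_unique : forall b1 b2 b3, linrel f g h b1 b2 b3 ->
  exists c : K, [/\ b1 = c *: a1, b2 = c *: a2 & b3 = c *: a3].
Hypothesis ea3 : a3 = k1 *: a1 + k2 *: a2.

Lemma net_h_neq0 : h != 0.
Proof.
apply/eqP => h0; apply: one_neq0.
by have := @fgh 0 0 1; rewrite h0 !scale0r scaler0 !addr0 => /(_ erefl) [_ []].
Qed.

Lemma relation_reduced : a1 * (f + k1 *: h) + a2 * (g + k2 *: h) = 0.
Proof. by rewrite -[RHS]rel ea3 -!mul_mpolyC; ring. Qed.

Lemma relation_indep12 : lin_indep2 a1 a2.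
Proof.
apply: NNPP => /not_lin_indep2 [x [y [exy nxy]]].
have := relation_reduced; set F := f + _; set G := g + _ => eFG.
(* a1 * (y F - x G) and a2 * (y F - x G) are combinations of the two relations *)
have e1 : a1 * (y *: F - x *: G) = 0.
  transitivity (y *: (a1 * F + a2 * G) - G * (x *: a1 + y *: a2)).
    by rewrite -!mul_mpolyC; ring.
  by rewrite eFG exy scaler0 mulr0 subr0.
have e2 : a2 * (y *: F - x *: G) = 0.
  transitivity (F * (x *: a1 + y *: a2) - x *: (a1 * F + a2 * G)).
    by rewrite -!mul_mpolyC; ring.
  by rewrite eFG exy scaler0 mulr0 subr0.
have eFG0 : y *: F - x *: G = 0.
  apply/eqP; apply: contraT => FG0; move/eqP: e2; move/eqP: e1.
  rewrite !mulf_eq0 (negbTE FG0) !orbF => /eqP a10 /eqP a20.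
  by exfalso; apply: a_neq0; rewrite ea3 a10 a20 !scaler0 addr0.
have [y0 [x0 _]] : y = 0 /\ - x = 0 /\ y * k1 - x * k2 = 0.
  by apply: fgh; rewrite -[RHS]eFG0 /F /G -!mul_mpolyC; ring.
by apply: nxy; split=> //; apply/eqP; rewrite -oppr_eq0 x0.
Qed.

Lemma relation_factor :
  exists2 m, linform m & f + k1 *: h = a2 * m /\ g + k2 *: h = - (a1 * m).
Proof.
have qF : quadric (f + k1 *: h) by rewrite /quadric rpredD // rpredZ.
exact: linear_syzygy2 la1 la2 relation_indep12 qF relation_reduced.
Qed.

Section Factor.
Variable m : P.
Hypotheses (lm : linform m) (eF : f + k1 *: h = a2 * m) (eG : g + k2 *: h = - (a1 * m)).

Lemma factor_neq0 : m != 0.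
Proof.
apply/eqP => m0; have [/one_neq0 //] : (1 : K) = 0 /\ (0 : K) = 0 /\ k1 = 0.
by apply: fgh; rewrite scale1r scale0r addr0 eF m0 mulr0.
Qed.

Lemma a2_neq0 : a2 != 0.
Proof.
apply/eqP => a20; have [_ /one_neq0 //] : (0 : K) = 0 /\ (1 : K) = 0.
by apply: relation_indep12; rewrite a20 scale0r scaler0 addr0.
Qed.

(* A linear divisor q of h gives the second relation (q, 0, k1 q - a2). *)
Lemma not_mdvd_factor : ~ mdvd m h.
Proof.
move=> /(mdvd_quadric_linform lm factor_neq0 qh) [q lq eh].
have [|c [eq c0 _]] := rel_unique (b1 := q) (b2 := 0) (b3 := k1 *: q - a2).
  split; rewrite /linform ?rpred0 ?rpredB ?rpredZ //.
  transitivity (q * (f + k1 *: h) - a2 * h); first by rewrite -!mul_mpolyC; ring.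
  by rewrite eF eh; ring.
move/eqP: c0; rewrite eq_sym scaler_eq0 (negbTE a2_neq0) orbF => /eqP c0.
by move: net_h_neq0; rewrite eh eq c0 scale0r mul0r eqxx.
Qed.

(* Similarly h = q v gives the relation (a q, b q, (a k1 + b k2) q - m). *)
Lemma not_mdvd_span (a b : K) : ~ mdvd (a *: a2 + b *: - a1) h.
Proof.
set v := _ + _ => dvd_vh.
have v0 : v != 0 by apply: contra_neq net_h_neq0 => v0; case: dvd_vh => q ->; rewrite v0 mulr0.
have lv : linform v by rewrite /linform rpredD ?rpredZ ?rpredN.
have [q lq eh] := mdvd_quadric_linform lv v0 qh dvd_vh.
have q0 : q != 0 by apply: contra_neq net_h_neq0 => q0; rewrite eh q0 mul0r.
have [|c [e1 e2 _]] := rel_unique (b1 := a *: q) (b2 := b *: q) (b3 := (a * k1 + b * k2) *: q - m).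
  split; rewrite /linform ?rpredB ?rpredZ //.
  transitivity (q * (a *: (f + k1 *: h) + b *: (g + k2 *: h)) - m * h).
    by rewrite -!mul_mpolyC; ring.
  by rewrite eF eG eh /v -!mul_mpolyC; ring.
have /eqP : c *: v = 0.
  transitivity (a *: (c *: a2) - b *: (c *: a1)); first by rewrite /v -!mul_mpolyC; ring.
  by rewrite -e1 -e2 !scalerA mulrC subrr.
rewrite scaler_eq0 (negbTE v0) orbF => /eqP c0; move: e1 e2; rewrite c0 !scale0r.
move=> /eqP; rewrite scaler_eq0 (negbTE q0) orbF => /eqP a0.
move=> /eqP; rewrite scaler_eq0 (negbTE q0) orbF => /eqP b0.
by move: v0; rewrite /v a0 b0 !scale0r addr0 eqxx.
Qed.

Lemma lU_presentation_factor : lU_presentation f g h.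
Proof.
have [nf ng] : f = a2 * m - k1 *: h /\ g = - (a1 * m) - k2 *: h.
  by rewrite -eF -eG !addrK.
exists m, a2, (- a1), h; split; split => //.
- by rewrite factor_neq0.
- by rewrite /linform rpredN.
- move=> x y exy; have [y0 x0] : - y = 0 /\ x = 0.
    by apply: relation_indep12; rewrite scaleNr -scalerN addrC.
  by split=> //; apply/eqP; rewrite -oppr_eq0 y0.
- apply: same_span3I.
  + by exists 1, 0, k1; rewrite mulrC -eF -!mul_mpolyC; ring.
  + by exists 0, 1, k2; rewrite mulrN mulrC -eG -!mul_mpolyC; ring.
  + by exists 0, 0, 1; rewrite -!mul_mpolyC; ring.
  + by exists 1, 0, (- k1); rewrite nf -!mul_mpolyC; ring.
  + by exists 0, 1, (- k2); rewrite ng -!mul_mpolyC; ring.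
  + by exists 0, 0, 1; rewrite -!mul_mpolyC; ring.
- exact: not_mdvd_factor.
- exact: not_mdvd_span.
Qed.

End Factor.

Lemma lU_presentation_reduced : lU_presentation f g h.
Proof. by have [m lm [eF eG]] := relation_factor; exact: lU_presentation_factor lm eF eG. Qed.

End ReducedRelation.

Lemma lU_presentation_relation f g h a1 a2 a3 (k1 k2 : K) :
  unique_relation f g h a1 a2 a3 -> a3 = k1 *: a1 + k2 *: a2 -> lU_presentation f g h.
Proof.
by case=> [[qf _ qh] fgh [la1 la2 _ rel] a_neq0 rel_unique]; exact: lU_presentation_reduced.
Qed.

(* By the Koszul resolution of (w, x, y), three independent linear coefficients
   would force a second, independent relation. *)
Lemma unique_relation_dep f g h a1 a2 a3 :
  unique_relation f g h a1 a2 a3 -> ~ lin_indep3 a1 a2 a3.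
Proof.
case=> [[qf qg qh] fgh [la1 la2 la3 rel] _ rel_unique] a123.
have [t [s [[ht hs ts st] [e1 e2 e3]]]] := coordinates3 la1 la2 la3 a123.
have := congr1 (comp_mpoly t) rel; rewrite !rmorphD !rmorphM /= e1 e2 e3 raddf0 => relt.
have [//|c1 [c2 [c3 [[hc1 hc2 hc3] eF eG eH]]]] :=
  koszulX3 _ (dhomog_comp ht qg) (dhomog_comp ht qh) relt.
have [|l [d1 d2 d3]] := rel_unique (c1 \mPo s) (c2 \mPo s) (c3 \mPo s).
  split; rewrite /linform ?(dhomog_comp hs) //; apply: (can_inj ts).
  by rewrite raddf0 !rmorphD !rmorphM /= !st eF eG eH; ring.
have f0 : f = 0.
  apply: (can_inj ts); rewrite raddf0 eF -(st c2) -(st c3) d2 d3 !comp_mpolyZ e2 e3.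
  by rewrite -!mul_mpolyC; ring.
have [] : (1 : K) = 0 /\ (0 : K) = 0 /\ (0 : K) = 0; last by move/one_neq0.
by apply: fgh; rewrite f0 !scale0r scaler0 !addr0.
Qed.

Lemma unique_relation12 f g h a1 a2 a3 :
  unique_relation f g h a1 a2 a3 -> unique_relation g f h a2 a1 a3.
Proof.
case=> [[qf qg qh] fgh [la1 la2 la3 rel] a_neq0 rel_unique]; split => //.
- move=> x y z e; have [-> [-> ->]] // : y = 0 /\ x = 0 /\ z = 0.
  by apply: fgh; rewrite (addrC (y *: f)).
- by split => //; rewrite (addrC (a2 * g)).
- by case=> a20 a10 a30; apply: a_neq0.
- move=> b1 b2 b3 [lb1 lb2 lb3 e].
  have [|c [eb2 eb1 eb3]] := rel_unique b2 b1 b3; last by exists c.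
  by split => //; rewrite (addrC (b2 * f)).
Qed.

Lemma unique_relation23 f g h a1 a2 a3 :
  unique_relation f g h a1 a2 a3 -> unique_relation f h g a1 a3 a2.
Proof.
case=> [[qf qg qh] fgh [la1 la2 la3 rel] a_neq0 rel_unique]; split => //.
- move=> x y z e; have [-> [-> ->]] // : x = 0 /\ z = 0 /\ y = 0.
  by apply: fgh; rewrite addrAC.
- by split => //; rewrite addrAC.
- by case=> a10 a30 a20; apply: a_neq0.
- move=> b1 b2 b3 [lb1 lb2 lb3 e].
  have [|c [eb1 eb3 eb2]] := rel_unique b1 b3 b2; last by exists c.
  by split => //; rewrite addrAC.
Qed.

Lemma lU_presentation12 f g h : lU_presentation g f h -> lU_presentation f g h.
Proof.
move=> [l [u1 [u2 [h' [hl [qh' e ndl ndu]]]]]]; exists l, u1, u2, h'; split => //.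
by split => //; apply: same_span3_trans e; exact: same_span3_swap12.
Qed.

Lemma lU_presentation23 f g h : lU_presentation f h g -> lU_presentation f g h.
Proof.
move=> [l [u1 [u2 [h' [hl [qh' e ndl ndu]]]]]]; exists l, u1, u2, h'; split => //.
by split => //; apply: same_span3_trans e; exact: same_span3_swap23.
Qed.

Lemma lU_presentation_unique_relation f g h a1 a2 a3 :
  unique_relation f g h a1 a2 a3 -> lU_presentation f g h.
Proof.
move=> rel; have [k1 [k2 [k3 [ek nk]]]] := not_lin_indep3 (unique_relation_dep rel).
have [k30|k3_neq0] := eqVneq k3 0.
  have [k20|k2_neq0] := eqVneq k2 0.
    have k1_neq0 : k1 != 0 by apply/eqP => k10; apply: nk.
    have ek' : k2 *: a2 + k3 *: a3 + k1 *: a1 = 0 by rewrite addrC addrA.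
    apply/lU_presentation12/lU_presentation23.
    have rel' := unique_relation23 (unique_relation12 rel).
    exact: lU_presentation_relation rel' (lin_rel3_solve k1_neq0 ek').
  have ek' : k1 *: a1 + k3 *: a3 + k2 *: a2 = 0 by rewrite addrAC.
  apply: lU_presentation23.
  exact: lU_presentation_relation (unique_relation23 rel) (lin_rel3_solve k2_neq0 ek').
exact: lU_presentation_relation rel (lin_rel3_solve k3_neq0 ek).
Qed.

Lemma span2_lincomb (u1 u2 : P) p q (x y : K) :
  span2 u1 u2 p -> span2 u1 u2 q -> span2 u1 u2 (x *: p + y *: q).
Proof.
move=> [x1 [y1 ->]] [x2 [y2 ->]]; exists (x * x1 + y * x2), (x * y1 + y * y2).
by rewrite -!mul_mpolyC; ring.
Qed.

Lemma same_span3_mul2 l (u1 u2 v1 v2 : P) h :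
  span2 u1 u2 v1 -> span2 u1 u2 v2 -> span2 v1 v2 u1 -> span2 v1 v2 u2 ->
  same_span3 (l * u1) (l * u2) h (l * v1) (l * v2) h.
Proof.
have mul_span a b p : span2 a b p -> span3 (l * a) (l * b) h (l * p).
  by move=> [x [y ->]]; exists x, y, 0; rewrite -!mul_mpolyC; ring.
have span_h a b : span3 (l * a) (l * b) h h by exists 0, 0, 1; rewrite -!mul_mpolyC; ring.
by move=> *; apply: same_span3I; auto.
Qed.

Lemma exchange_basis2 (u1 u2 : P) (a b : K) : lin_indep2 u1 u2 -> a *: u1 + b *: u2 != 0 ->
  exists u, [/\ u = u1 \/ u = u2, lin_indep2 (a *: u1 + b *: u2) u,
    span2 (a *: u1 + b *: u2) u u1 & span2 (a *: u1 + b *: u2) u u2].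
Proof.
set L := _ + _ => u12 L_neq0; have [b0|b_neq0] := eqVneq b 0.
  have a_neq0 : a != 0 by apply: contra_neq L_neq0 => a0; rewrite /L a0 b0 !scale0r addr0.
  have eL : L = a *: u1 by rewrite /L b0 scale0r addr0.
  exists u2; split; [by right | | | by exists 0, 1; rewrite scale0r add0r scale1r].
    move=> x y; rewrite eL scalerA => /u12 [/eqP]; rewrite mulf_eq0 (negbTE a_neq0) orbF.
    by move=> /eqP.
  by exists a^-1, 0; rewrite eL scalerA mulVf // scale1r scale0r addr0.
exists u1; split; [by left | | by exists 0, 1; rewrite scale0r add0r scale1r |].
  move=> x y exy; have [xay /eqP] : x * a + y = 0 /\ x * b = 0.
    by apply: u12; rewrite -exy /L -!mul_mpolyC; ring.
  rewrite mulf_eq0 (negbTE b_neq0) orbF => /eqP x0.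
  by move: xay; rewrite x0 mul0r add0r.
exists b^-1, (- (a / b)); rewrite -[u2 in LHS]scale1r -(mulVf b_neq0) /L -!mul_mpolyC.
ring.
Qed.

Lemma lU_presentation_normal_form f g h : lU_presentation f g h ->
  exists (t : 4.-tuple P) h', coord_change t /\ quadric h' /\
    ((same_span3 (f \mPo t) (g \mPo t) (h \mPo t) (Xx K * Xw K) (Xy K * Xw K) h'
      /\ ~ mdvd (Xw K) h' /\ forall a b : K, ~ mdvd (a *: Xx K + b *: Xy K) h')
     \/ (same_span3 (f \mPo t) (g \mPo t) (h \mPo t) (Xw K ^+ 2) (Xw K * Xx K) h'
      /\ forall a b : K, ~ mdvd (a *: Xw K + b *: Xx K) h')).
Proof.
rewrite /Xw /Xx /Xy; move=> [l [u1 [u2 [h' [[ll l_neq0 lu1 lu2 u12] [qh' e ndl ndu]]]]]].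
have [lu12|/not_lin_indep3 [x [y [z [exyz nxyz]]]]] := classic (lin_indep3 l u1 u2).
  have [t [s [ts [e1 e2 e3]]]] := coordinates3 ll lu1 lu2 lu12.
  have [ht _ tK _] := ts.
  exists t, (h' \mPo t); split; first exact: coord_change_lin_inverses ts.
  split; first exact: dhomog_comp.
  left; split; [|split].
  - have := same_span3_comp t e; rewrite !rmorphM /= !(mulrC (l \mPo t)).
    by rewrite e1 e2 e3.
  - case=> q eq; apply: ndl; exists (q \mPo s).
    by rewrite -(tK h') eq rmorphM /= -e1 tK.
  - move=> a b [q eq]; apply: (ndu a b); exists (q \mPo s).
    by rewrite -(tK h') eq rmorphM /= raddfD /= !comp_mpolyZ -e2 -e3 !tK.
have x_neq0 : x != 0.
  apply/eqP => x0; move: exyz; rewrite x0 scale0r add0r => /u12 [y0 z0]; exact: nxyz.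
have /(lin_rel3_solve x_neq0) el : y *: u1 + z *: u2 + x *: l = 0 by rewrite addrC addrA.
move: (- y / x) (- z / x) el => a b el; subst l.
have [u [uu12 indep_lu span_u1 span_u2]] := exchange_basis2 u12 l_neq0.
have lu : linform u by case: uu12 => ->.
have span_u : span2 u1 u2 u.
  by case: uu12 => ->; [exists 1, 0 | exists 0, 1]; rewrite -!mul_mpolyC; ring.
have span_l : span2 u1 u2 (a *: u1 + b *: u2) by exists a, b.
have [t [s [ts [e1 e2]]]] := coordinates2 ll lu indep_lu.
have [ht _ tK _] := ts.
exists t, (h' \mPo t); split; first exact: coord_change_lin_inverses ts.
split; first exact: dhomog_comp.
right; split.
  have e' := same_span3_mul2 (a *: u1 + b *: u2) h' span_l span_u span_u1 span_u2.
  have := same_span3_comp t (same_span3_trans e e').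
  by rewrite !rmorphM /= e1 e2 expr2.
move=> c d [q eq]; have [c' [d' ecd]] := span2_lincomb c d span_l span_u.
apply: (ndu c' d'); exists (q \mPo s).
by rewrite -ecd -(tK h') eq rmorphM /= raddfD /= !comp_mpolyZ -e1 -e2 !tK.
Qed.

End Nets.

Theorem lemma3p2 (K : closedFieldType) (f g h : {mpoly K[4]}) :
  quadric f -> quadric g -> quadric h ->
  lin_indep3 f g h ->
  linrels_dim1 f g h ->
  (exists (l u1 u2 h' : {mpoly K[4]}),
     linform l /\ linform u1 /\ linform u2 /\ lin_indep2 u1 u2 /\ quadric h' /\
     same_span3 f g h (l * u1) (l * u2) h' /\
     ~ mdvd l h' /\
     (forall a b : K, ~ mdvd (a *: u1 + b *: u2) h'))
  /\
  (exists (t : 4.-tuple {mpoly K[4]}) (h' : {mpoly K[4]}),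
     coord_change t /\ quadric h' /\
     ((same_span3 (f \mPo t) (g \mPo t) (h \mPo t)
                  (Xx K * Xw K) (Xy K * Xw K) h'
       /\ ~ mdvd (Xw K) h'
       /\ forall a b : K, ~ mdvd (a *: Xx K + b *: Xy K) h')
      \/
      (same_span3 (f \mPo t) (g \mPo t) (h \mPo t)
                  (Xw K ^+ 2) (Xw K * Xx K) h'
       /\ forall a b : K, ~ mdvd (a *: Xw K + b *: Xx K) h'))).
Proof.
move=> qf qg qh fgh [a1 [a2 [a3 [rel a_neq0 rel_unique]]]].
have urel : unique_relation f g h a1 a2 a3.
  by split => //; case=> a10 a20 a30; move: a_neq0; rewrite a10 a20 a30 eqxx.
have lU := lU_presentation_unique_relation urel.
split; last exact: lU_presentation_normal_form.
have [l [u1 [u2 [h' [[ll _ lu1 lu2 u12] [qh' e ndl ndu]]]]]] := lU.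
by exists l, u1, u2, h'.
Qed.
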